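(* For any nontrivial connected graph $G$, $\gamma_{oiR}(G)<\gamma_{oidR}(G)<2\gamma_{oiR}(G)$.
   Context: A graph is nontrivial if it has at least two vertices. A DRD function of $G$ is $f:V(G)\to\{0,1,2,3\}$ such that every vertex with value $0$ has a neighbor with value $3$ or two neighbors with value $2$, and every vertex with value $1$ has a neighbor with value at least $2$; it is an OIDRD function if the set of vertices with value $0$ is independent, and $\gamma_{oidR}(G)$ is the minimum weight $\sum_v f(v)$ of an OIDRD function. A Roman dominating function is $f:V(G)\to\{0,1,2\}$ such that every vertex with value $0$ has a neighbor with value $2$; it is an OIRD function if the set of vertices with value $0$ is independent, and $\gamma_{oiR}(G)$ is the minimum weight of an OIRD function. *)

From mathcomp Require Import all_boot.
Set Implicit Arguments. Unset Strict Implicit. Unset Printing Implicit Defensive.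

Definition simple_graph (T : finType) (e : rel T) : Prop :=
  symmetric e /\ irreflexive e.

Definition nontrivial (T : finType) : Prop := 2 <= #|T|.

Definition connected_graph (T : finType) (e : rel T) : Prop :=
  forall x y : T, connect e x y.

Definition is_DRD (T : finType) (e : rel T) (f : {ffun T -> 'I_4}) : bool :=
  [forall v,
     ((f v : nat) == 0) ==>
       ([exists u, e v u && ((f u : nat) == 3)] ||
        [exists u, exists w, [&& u != w, e v u, e v w,
                                 (f u : nat) == 2 & (f w : nat) == 2]])]
  && [forall v, ((f v : nat) == 1) ==> [exists u, e v u && (2 <= f u)]].

Definition zeros_independent (T : finType) (e : rel T) (n : nat)
    (f : {ffun T -> 'I_n}) : bool :=
  [forall u, forall v, (((f u : nat) == 0) && ((f v : nat) == 0)) ==> ~~ e u v].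

Definition is_OIDRD (T : finType) (e : rel T) (f : {ffun T -> 'I_4}) : bool :=
  is_DRD e f && zeros_independent e f.

Definition is_RD (T : finType) (e : rel T) (f : {ffun T -> 'I_3}) : bool :=
  [forall v, ((f v : nat) == 0) ==> [exists u, e v u && ((f u : nat) == 2)]].

Definition is_OIRD (T : finType) (e : rel T) (f : {ffun T -> 'I_3}) : bool :=
  is_RD e f && zeros_independent e f.

Definition weight (T : finType) (n : nat) (f : {ffun T -> 'I_n}) : nat :=
  \sum_(v : T) (f v : nat).

(* The neutral element of minn is larger than the weight of
   the constant-3 (resp. constant-2) function, which is always an OIDRD
   (resp. OIRD) function, so these are genuine minima. *)
Definition gamma_oidR (T : finType) (e : rel T) : nat :=
  \big[minn/(4 * #|T|)]_(f : {ffun T -> 'I_4} | is_OIDRD e f) weight f.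

Definition gamma_oiR (T : finType) (e : rel T) : nat :=
  \big[minn/(3 * #|T|)]_(f : {ffun T -> 'I_3} | is_OIRD e f) weight f.

(* From an OIDRD function f one gets a cheaper OIRD function with the same
   zeros: cap the labels at 2 if f uses the label 3; otherwise f uses the
   label 2 (T is nonempty), every 0 has two neighbours labelled 2, and one
   vertex labelled 2 can be lowered to 1.  Conversely, an OIRD function g
   yields an OIDRD function of weight below 2 w(g): map 1 to 2 and 2 to 3 if g
   uses the label 2; otherwise g is constantly 1, and labelling a vertex x by 1
   and every other vertex by 2 works because x has a neighbour.  All these
   constructions keep the set of zeros, hence its independence. *)

From mathcomp Require Import all_boot order.
Import Order.TTheory.

Set Implicit Arguments.
Unset Strict Implicit.
Unset Printing Implicit Defensive.

Lemma leq_ltn_sum (I : finType) (F G : I -> nat) j :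
  (forall i, F i <= G i) -> F j < G j -> \sum_i F i < \sum_i G i.
Proof.
move=> leFG ltFGj; rewrite (bigD1 j) // [X in _ < X](bigD1 j) //= -addSn.
by rewrite leq_add // leq_sum.
Qed.

Section OuterIndependentRoman.

Variables (T : finType) (e : rel T).

Definition inord_ffun n (h : T -> nat) : {ffun T -> 'I_n.+1} :=
  [ffun v => inord (h v)].

Lemma inord_ffunE n (h : T -> nat) v :
  h v <= n -> inord_ffun n h v = h v :> nat.
Proof. by move=> le_hn; rewrite ffunE inordK. Qed.

Lemma weight_leq n (f : {ffun T -> 'I_n}) : weight f <= n * #|T|.
Proof.
rewrite /weight mulnC -sum_nat_const; apply: leq_sum => v _.
exact: ltnW (ltn_ord _).
Qed.

Lemma zeros_independent_eq n m (f : {ffun T -> 'I_n}) (g : {ffun T -> 'I_m}) :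
  (forall v, ((f v : nat) == 0) = ((g v : nat) == 0)) ->
  zeros_independent e g -> zeros_independent e f.
Proof.
move=> zfg /forallP indep_g; apply/forallP => u; apply/forallP => v.
by rewrite !zfg; exact: (forallP (indep_g u) v).
Qed.

Lemma is_RDP (g : {ffun T -> 'I_3}) :
  reflect (forall v, g v = 0 :> nat -> exists2 u, e v u & g u = 2 :> nat)
          (is_RD e g).
Proof.
apply: (iffP forallP) => [RDg v /eqP g0 | dom v].
  by have /existsP [u /andP [evu /eqP gu]] := implyP (RDg v) g0; exists u.
apply/implyP => /eqP /dom [u evu gu].
by apply/existsP; exists u; rewrite evu gu.
Qed.

Lemma DRD_small_neighbor (f : {ffun T -> 'I_4}) v :
  is_DRD e f -> f v < 2 -> exists2 u, e v u & 2 <= f u.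
Proof.
case/andP => /forallP DRD0 /forallP DRD1.
move: (DRD0 v) (DRD1 v); case: (f v) => [[|[|k]] //= _] => [dom _ _ | _ dom _].
- case/orP: dom => [/existsP [u /andP [evu /eqP fu]]
    | /existsP [u /existsP [w /and5P [_ evu _ /eqP fu _]]]];
    by exists u => //; rewrite fu.
- by case/existsP: dom => u /andP [evu fu]; exists u.
Qed.

Lemma DRD_zero_avoid (f : {ffun T -> 'I_4}) v u :
  is_DRD e f -> (forall w, f w != 3 :> nat) -> f v = 0 :> nat ->
  exists2 w, e v w & (w != u) && (f w == 2 :> nat).
Proof.
case/andP => /forallP DRD0 _ no3 /eqP fv0.
case/orP: (implyP (DRD0 v) fv0) => [/existsP [w /andP [_ fw3]]
  | /existsP [w1 /existsP [w2 /and5P [nw12 evw1 evw2 fw1 fw2]]]].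
  by have := no3 w; rewrite fw3.
have [w1u | nw1u] := eqVneq w1 u.
  by exists w2; rewrite // -w1u eq_sym nw12.
by exists w1; rewrite // nw1u.
Qed.

Lemma DRD_intro (f : {ffun T -> 'I_4}) :
  (forall v, f v = 0 :> nat -> exists2 u, e v u & f u = 3 :> nat) ->
  (forall v, f v = 1 :> nat -> exists2 u, e v u & 2 <= f u) ->
  is_DRD e f.
Proof.
move=> dom0 dom1; apply/andP; split; apply/forallP => v; apply/implyP => /eqP.
  case/dom0 => u evu fu; apply/orP; left.
  by apply/existsP; exists u; rewrite evu fu.
by case/dom1 => u evu fu; apply/existsP; exists u; rewrite evu.
Qed.

Lemma gamma_oidR_le (f : {ffun T -> 'I_4}) :
  is_OIDRD e f -> gamma_oidR e <= weight f.
Proof. exact: (@bigmin_le_cond _ nat). Qed.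

Lemma gamma_oiR_le (g : {ffun T -> 'I_3}) :
  is_OIRD e g -> gamma_oiR e <= weight g.
Proof. exact: (@bigmin_le_cond _ nat). Qed.

Lemma gamma_oidR_attained : exists2 f, is_OIDRD e f & gamma_oidR e = weight f.
Proof.
pose f3 := inord_ffun 3 (fun=> 3).
have f3E v : f3 v = 3 :> nat by rewrite inord_ffunE.
have OIDRD_f3 : is_OIDRD e f3.
  apply/andP; split; last by apply/forallP => u; apply/forallP => v; rewrite !f3E.
  by apply: DRD_intro => v; rewrite f3E.
have [f OIDRDf min_f] :=
  @eq_bigmin _ nat _ _ _ _ (@weight T 4) OIDRD_f3 (fun f _ => weight_leq f).
by exists f.
Qed.

Lemma gamma_oiR_attained : exists2 g, is_OIRD e g & gamma_oiR e = weight g.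
Proof.
pose g2 := inord_ffun 2 (fun=> 2).
have g2E v : g2 v = 2 :> nat by rewrite inord_ffunE.
have OIRD_g2 : is_OIRD e g2.
  apply/andP; split; last by apply/forallP => u; apply/forallP => v; rewrite !g2E.
  by apply/is_RDP => v; rewrite g2E.
have [g OIRDg min_g] :=
  @eq_bigmin _ nat _ _ _ _ (@weight T 3) OIRD_g2 (fun g _ => weight_leq g).
by exists g.
Qed.

Lemma OIRD_truncate (f : {ffun T -> 'I_4}) u :
  is_OIDRD e f -> f u = 3 :> nat ->
  exists2 g, is_OIRD e g & weight g < weight f.
Proof.
case/andP=> DRDf indep_f fu3.
pose g := inord_ffun 2 (fun v => minn (f v) 2).
have gE v : g v = minn (f v) 2 :> nat by rewrite inord_ffunE // geq_minr.
have g0 v : ((g v : nat) == 0) = ((f v : nat) == 0).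
  by rewrite gE; case: (f v) => [[|[|[|[|k]]]] ?].
exists g.
  rewrite /is_OIRD (zeros_independent_eq g0 indep_f) andbT.
  apply/is_RDP => v /eqP; rewrite g0 => /eqP fv0.
  have [|w evw fw] := DRD_small_neighbor (v := v) DRDf; first by rewrite fv0.
  by exists w; rewrite // gE; apply/minn_idPr.
by apply: (leq_ltn_sum (j := u)) => [v|]; rewrite gE ?geq_minl // fu3.
Qed.

Lemma OIRD_lower (f : {ffun T -> 'I_4}) u :
  is_OIDRD e f -> (forall w, f w != 3 :> nat) -> f u = 2 :> nat ->
  exists2 g, is_OIRD e g & weight g < weight f.
Proof.
case/andP=> DRDf indep_f no3 fu2.
have f_le2 v : f v <= 2 by move: (no3 v); case: (f v) => [[|[|[|[|k]]]] ?].
pose g := inord_ffun 2 (fun v => if v == u then 1 else f v).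
have gE v : g v = (if v == u then 1 else f v) :> nat.
  by rewrite inord_ffunE //; case: ifP.
have g0 v : ((g v : nat) == 0) = ((f v : nat) == 0).
  by rewrite gE; case: (eqVneq v u) => // ->; rewrite fu2.
exists g.
  rewrite /is_OIRD (zeros_independent_eq g0 indep_f) andbT.
  apply/is_RDP => v /eqP; rewrite g0 => /eqP fv0.
  have [w evw /andP [nwu /eqP fw2]] := DRD_zero_avoid u DRDf no3 fv0.
  by exists w; rewrite // gE (negbTE nwu).
apply: (leq_ltn_sum (j := u)) => [v|]; rewrite gE; last by rewrite eqxx fu2.
by case: (eqVneq v u) => // ->; rewrite fu2.
Qed.

Lemma OIRD_below_OIDRD (x : T) (f : {ffun T -> 'I_4}) :
  is_OIDRD e f -> exists2 g, is_OIRD e g & weight g < weight f.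
Proof.
move=> OIDRDf.
have [/existsP [u /eqP fu3] | ] := boolP [exists u, f u == 3 :> nat].
  exact: OIRD_truncate OIDRDf fu3.
rewrite negb_exists => /forallP no3.
have [u fu_ge2] : exists u, 2 <= f u.
  have [fx_ge2 | fx_lt2] := leqP 2 (f x); first by exists x.
  by have [u _ fu_ge2] := DRD_small_neighbor (andP OIDRDf).1 fx_lt2; exists u.
apply: (OIRD_lower (u := u) OIDRDf no3).
by move: fu_ge2 (no3 u); case: (f u) => [[|[|[|[|k]]]] ?].
Qed.

Lemma OIDRD_double (g : {ffun T -> 'I_3}) u :
  is_OIRD e g -> g u = 2 :> nat ->
  exists2 f, is_OIDRD e f & weight f < 2 * weight g.
Proof.
case/andP=> /is_RDP RDg indep_g gu2.
pose f := inord_ffun 3 (fun v => if g v == 2 :> nat then 3 else 2 * g v).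
have fE v : f v = (if g v == 2 :> nat then 3 else 2 * g v) :> nat.
  by rewrite inord_ffunE //; case: (g v) => [[|[|[|k]]] ?].
have f0 v : ((f v : nat) == 0) = ((g v : nat) == 0).
  by rewrite fE; case: (g v) => [[|[|[|k]]] ?].
exists f.
  rewrite /is_OIDRD (zeros_independent_eq f0 indep_g) andbT.
  apply: DRD_intro => v; rewrite fE; last by case: (g v) => [[|[|[|k]]] ?].
  move=> /eqP; rewrite -fE f0 => /eqP /RDg [w evw gw2].
  by exists w; rewrite // fE gw2.
rewrite /weight big_distrr; apply: (leq_ltn_sum (j := u)) => [v|]; rewrite fE.
  by case: (g v) => [[|[|[|k]]] ?].
by rewrite gu2.
Qed.

Lemma OIDRD_below_twice_all_one (g : {ffun T -> 'I_3}) x w :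
  e x w -> x != w -> (forall v, g v = 1 :> nat) ->
  exists2 f, is_OIDRD e f & weight f < 2 * weight g.
Proof.
move=> exw nxw g1.
pose f := inord_ffun 3 (fun v => if v == x then 1 else 2).
have fE v : f v = (if v == x then 1 else 2) :> nat.
  by rewrite inord_ffunE //; case: ifP.
exists f.
  apply/andP; split; last first.
    by apply/forallP => a; apply/forallP => b; rewrite !fE; case: ifP; case: ifP.
  apply: DRD_intro => v; rewrite fE; case: (eqVneq v x) => // -> _.
  by exists w; rewrite // fE eq_sym (negbTE nxw).
rewrite /weight big_distrr; apply: (leq_ltn_sum (j := x)) => [v|]; rewrite fE g1.
  by case: ifP.
by rewrite eqxx.
Qed.

Lemma RD_without_two (g : {ffun T -> 'I_3}) v :
  is_RD e g -> (forall w, g w != 2 :> nat) -> g v = 1 :> nat.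
Proof.
move=> /is_RDP RDg no2; move: (no2 v) (@RDg v).
case: (g v) => [[|[|[|k]]] ?] //= _ /(_ erefl) [w _ gw2].
by have := no2 w; rewrite gw2.
Qed.

Lemma OIDRD_below_twice_OIRD x w (g : {ffun T -> 'I_3}) :
  e x w -> x != w -> is_OIRD e g ->
  exists2 f, is_OIDRD e f & weight f < 2 * weight g.
Proof.
move=> exw nxw OIRDg.
have [/existsP [u /eqP gu2] | ] := boolP [exists u, g u == 2 :> nat].
  exact: OIDRD_double OIRDg gu2.
rewrite negb_exists => /forallP no2.
apply: (OIDRD_below_twice_all_one exw nxw) => v.
exact: RD_without_two (andP OIRDg).1 no2.
Qed.

End OuterIndependentRoman.

Lemma connect_neq_out_edge (T : finType) (e : rel T) x y :
  connect e x y -> x != y -> exists w, e x w.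
Proof.
case/connectP => [[|w p]] /= path_xp -> //; first by rewrite eqxx.
by case/andP: path_xp => exw _ _; exists w.
Qed.

Theorem corollary2 (T : finType) (e : rel T) :
  simple_graph e -> nontrivial T -> connected_graph e ->
  gamma_oiR e < gamma_oidR e < 2 * gamma_oiR e.
Proof.
move=> [_ irr] /card_gt1P [x [y [_ _ nxy]]] conn.
have [w exw] := connect_neq_out_edge (conn x y) nxy.
have nxw : x != w by apply: contraTneq exw => <-; rewrite irr.
apply/andP; split.
  have [f OIDRDf ->] := gamma_oidR_attained e.
  have [g OIRDg lt_gf] := OIRD_below_OIDRD x OIDRDf.
  exact: leq_ltn_trans (gamma_oiR_le OIRDg) lt_gf.
have [g OIRDg ->] := gamma_oiR_attained e.
have [f OIDRDf lt_fg] := OIDRD_below_twice_OIRD exw nxw OIRDg.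
exact: leq_ltn_trans (gamma_oidR_le OIDRDf) lt_fg.
Qed.
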